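(* Let $\mathcal{S}$ be a relational schema, $\mathit{IC}$ a finite set of universal integrity constraints, $D$ a database instance (without nulls), and $\mathcal{Q}(\bar x)$ a query given by a non-recursive normal Datalog$^{\mathit{not}}$ program $\Pi^{\mathcal{Q}}$ whose extensional predicates are the $P_{\star\star}$ ($P\in\mathcal{S}$) and built-ins, and whose answer predicate $\mathit{Ans}^{\mathcal{Q}}$ occurs only in rule heads. Let $\Pi^r$ be the repair program $\Pi(\mathit{IC},D)$ without the database facts, and $\Pi=D\cup\Pi^r\cup\Pi^{\mathcal{Q}}$. Then for every tuple of constants $\bar a$: $$D\models_c\mathcal{Q}(\bar a)\iff\{\mathcal{R}(D),\Phi(\Pi^r),\Phi(\Pi^{\mathcal{Q}})\}\models\mathit{Ans}^{\mathcal{Q}}(\bar a),$$ where $\Phi(\Pi^r)$ is the SO sentence specifying the repairs for fixed extensional predicates $P\in\mathcal{S}$, and $\Phi(\Pi^{\mathcal{Q}})$ is the SO sentence specifying the models of the query program for fixed predicates $P_{\star\star}$.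
   Context: A repair of $D$ w.r.t. $\mathit{IC}$ is an instance $D'$ over $\mathcal{S}$ with $D'\models\mathit{IC}$ such that the symmetric difference $\Delta(D,D')$ is minimal under set inclusion among such instances. $\bar a$ is a consistent answer, written $D\models_c\mathcal{Q}(\bar a)$, iff $D'\models\mathcal{Q}(\bar a)$ for every repair $D'$ of $D$ (for a Datalog query: $\bar a$ is an answer to the query program using $D'$ as extensional database). Repair program: for each $P\in\mathcal{S}$ new predicates $P_{\mathbf{t}},P_{\mathbf{f}},P_\star,P_{\star\star}$; rules: facts $P(\bar a)$ for $P(\bar a)\in D$; for each constraint $\forall \bar{x}(\bigwedge_{i=1}^{m} P_i(\bar{x}_i) \rightarrow \bigvee_{j=1}^{n} Q_j(\bar{y}_j) \vee \varphi)$ and each partition $Q'\cup Q''$ of $\{Q_1,\ldots,Q_n\}$ the rule $\bigvee_{i} P_{i,\mathbf{f}}(\bar{x}_i)\vee\bigvee_{j} Q_{j,\mathbf{t}}(\bar y_j)\leftarrow \bigwedge_{i} P_{i,\star}(\bar x_i), \bigwedge_{Q_j\in Q'}Q_{j,\mathbf{f}}(\bar y_j), \bigwedge_{Q_k\in Q''}\mathit{not}\,Q_k(\bar y_k), \bar\varphi$ ($\bar\varphi$ built-ins equivalent to $\neg\varphi$); $P_\star(\bar x)\leftarrow P(\bar x)$; $P_\star(\bar x)\leftarrow P_{\mathbf{t}}(\bar x)$; $P_{\star\star}(\bar x)\leftarrow P_\star(\bar x),\mathit{not}\,P_{\mathbf{f}}(\bar x)$; program constraints $\leftarrow P_{\mathbf{t}}(\bar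 x),P_{\mathbf{f}}(\bar x)$. For a program $\Pi_0$, $\psi(\Pi_0)$ is the conjunction of universal closures of $\mathit{Body}\rightarrow\mathit{Head}$ (commas as $\wedge$, $\mathit{not}$ as $\neg$, constraints $\leftarrow B$ as $\neg B$). Given a set $\bar P$ of predicates to be minimized, $\Phi:=\psi\wedge\neg\exists\bar X((\bar X<\bar P)\wedge\psi^\circ(\bar X))$, where $\bar X$ are predicate variables for $\bar P$, $\bar X<\bar P$ means componentwise inclusion with at least one strict, and $\psi^\circ$ replaces each $P_i\in\bar P$ by $X^{P_i}$ recursively with $(F\rightarrow G)^\circ=(F^\circ\rightarrow G^\circ)\wedge(F\rightarrow G)$, negation written as $\chi\rightarrow\bot$, other connectives, quantifiers, built-ins, $\bot$ and non-minimized predicates unchanged. $\Phi(\Pi^r)$ is this sentence for $\Pi^r$ with $\bar P$ the predicates $P_{\mathbf{t}},P_{\mathbf{f}},P_\star,P_{\star\star}$; $\Phi(\Pi^{\mathcal Q})$ is this sentence for $\Pi^{\mathcal Q}$ with $\bar P$ the predicates defined in $\Pi^{\mathcal Q}$ (not the $P_{\star\star}$). $\mathcal{R}(D)$ is the conjunction of the domain closure axiom over the constants, unique names axioms, and for each $P\in\mathcal{S}$ the completion $\forall\bar x(P(\bar x)\equiv\bigvee_{P(\bar a)\in D}\bar x=\bar a)$. *)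

From mathcomp Require Import all_boot.
From Stdlib Require Import Relations.Relation_Operators.
Set Implicit Arguments. Unset Strict Implicit. Unset Printing Implicit Defensive.

Fixpoint AllP (A : Type) (P : A -> Prop) (s : seq A) : Prop :=
  if s is x :: s' then P x /\ AllP P s' else True.
Fixpoint ExP (A : Type) (P : A -> Prop) (s : seq A) : Prop :=
  if s is x :: s' then P x \/ ExP P s' else False.

Inductive term (Const : Type) := TVar of nat | TConst of Const.
Arguments TVar {Const}. Arguments TConst {Const}.

Inductive batom (Const Bi : Type) :=
| BEq of term Const & term Const
| BRel of Bi & seq (term Const).
Arguments BEq {Const Bi}. Arguments BRel {Const Bi}.

(* Predicate symbols of the program Pi = D u Pi^r u Pi^Q :             *)
(* P, P_t, P_f, P_star, P_starstar for P in S, and the predicates     *)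
(* defined in the query program (type QPred, which contains Ans^Q).    *)
Inductive sym (Pred QPred : Type) :=
| SBase of Pred | St of Pred | Sf of Pred | Sstar of Pred | Sss of Pred
| SQ of QPred.
Arguments SBase {Pred QPred}. Arguments St {Pred QPred}. Arguments Sf {Pred QPred}.
Arguments Sstar {Pred QPred}. Arguments Sss {Pred QPred}. Arguments SQ {Pred QPred}.

(* (the boolean is the polarity: true = positive).                     *)
Inductive lit (S Const Bi : Type) :=
| LPos of S & seq (term Const)
| LNeg of S & seq (term Const)
| LBi of bool & batom Const Bi.
Arguments LPos {S Const Bi}. Arguments LNeg {S Const Bi}. Arguments LBi {S Const Bi}.

(* A rule  H_1 v ... v H_k <- L_1, ..., L_m  (k = 0: program constraint). *)
Record rule (S Const Bi : Type) := Rule {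
  rhead : seq (S * seq (term Const));
  rbody : seq (lit S Const Bi) }.

(* A universal integrity constraint                                    *)
(*   forall x (P_1(x_1) /\ ... /\ P_m(x_m) -> Q_1(y_1) v ... v Q_n(y_n) v phi) *)
(* where phi is a disjunction of (possibly negated) built-in atoms.    *)
Record constr (Pred Const Bi : Type) := Constr {
  cbody : seq (Pred * seq (term Const));
  chead : seq (Pred * seq (term Const));
  cphi  : seq (bool * batom Const Bi) }.

Section Semantics.
Variables (Const Bi S U : Type).
Variable ic : Const -> U.
Variable bU : Bi -> seq U -> Prop.

Definition eval_term (rho : nat -> U) (t : term Const) : U :=
  match t with TVar n => rho n | TConst c => ic c end.

Definition sat_batom rho (b : batom Const Bi) : Prop :=
  match b with
  | BEq t1 t2 => eval_term rho t1 = eval_term rho t2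
  | BRel p ts => bU p (map (eval_term rho) ts)
  end.

Definition sat_bilit rho (pb : bool * batom Const Bi) : Prop :=
  if pb.1 then sat_batom rho pb.2 else ~ sat_batom rho pb.2.

Variable rel : S -> seq U -> Prop.

Definition sat_atom rho (a : S * seq (term Const)) : Prop :=
  rel a.1 (map (eval_term rho) a.2).

Definition sat_lit rho (l : lit S Const Bi) : Prop :=
  match l with
  | LPos s ts => rel s (map (eval_term rho) ts)
  | LNeg s ts => ~ rel s (map (eval_term rho) ts)
  | LBi p b => sat_bilit rho (p, b)
  end.

Definition sat_rule (r : rule S Const Bi) : Prop :=
  forall rho : nat -> U,
    AllP (sat_lit rho) (rbody r) -> ExP (sat_atom rho) (rhead r).

Definition psi (Pi0 : seq (rule S Const Bi)) : Prop := AllP sat_rule Pi0.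

(* psi^o(X): the transformation  ^o  unfolded on rule formulas.
   Minimized predicates (min s = true) are replaced by X in atoms;
   (F -> G)^o = (F^o -> G^o) /\ (F -> G);  not A = (A -> bot), so
   (not A)^o = (A^o -> bot) /\ (A -> bot); built-ins and bot unchanged;
   conjunction, disjunction and quantifiers commute with ^o. *)
Variables (min : S -> bool) (X : S -> seq U -> Prop).

Definition relo (s : S) : seq U -> Prop := if min s then X s else rel s.

Definition sat_atom_o rho (a : S * seq (term Const)) : Prop :=
  relo a.1 (map (eval_term rho) a.2).

Definition sat_lit_o rho (l : lit S Const Bi) : Prop :=
  match l with
  | LPos s ts => relo s (map (eval_term rho) ts)
  | LNeg s ts => (relo s (map (eval_term rho) ts) -> False) /\
                 (rel s (map (eval_term rho) ts) -> False)
  | LBi true b => sat_batom rho b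
  | LBi false b => (sat_batom rho b -> False) /\ (sat_batom rho b -> False)
  end.

Definition sat_rule_o (r : rule S Const Bi) : Prop :=
  forall rho : nat -> U,
    (AllP (sat_lit_o rho) (rbody r) -> ExP (sat_atom_o rho) (rhead r)) /\
    (AllP (sat_lit rho) (rbody r) -> ExP (sat_atom rho) (rhead r)).

Definition psi_o (Pi0 : seq (rule S Const Bi)) : Prop := AllP sat_rule_o Pi0.

End Semantics.

Definition Phi (Const Bi S U : Type) (ic : Const -> U) (bU : Bi -> seq U -> Prop)
  (sar : S -> nat) (min : S -> bool) (Pi0 : seq (rule S Const Bi))
  (rel : S -> seq U -> Prop) : Prop :=
  psi ic bU rel Pi0 /\
  ~ exists X : S -> seq U -> Prop,
      (forall s us, X s us -> size us = sar s) /\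
      (forall s, min s -> forall us, X s us -> rel s us) /\
      (exists s us, min s /\ rel s us /\ ~ X s us) /\
      psi_o ic bU rel min X Pi0.

Section Setting.
Variables (Const Pred : finType) (QPred Bi : Type).
Variables (ar : Pred -> nat) (qar : QPred -> nat).
Variable bint : Bi -> seq Const -> bool.

Definition sym_ar (s : sym Pred QPred) : nat :=
  match s with
  | SBase P | St P | Sf P | Sstar P | Sss P => ar P
  | SQ q => qar q
  end.

Local Notation S := (sym Pred QPred).
Local Notation Rule := (rule S Const Bi).
Local Notation IConstr := (constr Pred Const Bi).

Definition bintP (b : Bi) (cs : seq Const) : Prop := bint b cs.

Definition wf_db (D : seq (Pred * seq Const)) : Prop :=
  AllP (fun f => size f.2 = ar f.1) D.

Definition wf_constr (c : IConstr) : Prop :=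
  AllP (fun a => size a.2 = ar a.1) (cbody c) /\
  AllP (fun a => size a.2 = ar a.1) (chead c).

Definition instance := Pred -> seq Const -> Prop.
Definition wf_inst (I : instance) : Prop := forall P t, I P t -> size t = ar P.

Definition inst_sat_constr (I : instance) (c : IConstr) : Prop :=
  forall rho : nat -> Const,
    AllP (fun a => I a.1 (map (eval_term id rho) a.2)) (cbody c) ->
    ExP (fun a => I a.1 (map (eval_term id rho) a.2)) (chead c) \/
    ExP (sat_bilit id bintP rho) (cphi c).

Definition inst_sat_IC (I : instance) (IC : seq IConstr) : Prop :=
  AllP (inst_sat_constr I) IC.

Definition inD (D : seq (Pred * seq Const)) (P : Pred) (t : seq Const) : Prop :=
  ExP (fun f => f.1 = P /\ f.2 = t) D.

Definition Delta (D : seq (Pred * seq Const)) (I : instance) P t : Prop :=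
  ~ (inD D P t <-> I P t).

Definition is_repair (IC : seq IConstr) (D : seq (Pred * seq Const)) (I : instance) : Prop :=
  wf_inst I /\ inst_sat_IC I IC /\
  forall J : instance, wf_inst J -> inst_sat_IC J IC ->
    (forall P t, Delta D J P t -> Delta D I P t) ->
    (forall P t, Delta D I P t -> Delta D J P t).

Definition lit_sym (l : lit S Const Bi) : option S :=
  match l with LPos s _ | LNeg s _ => Some s | LBi _ _ => None end.

Definition head_is (r : Rule) (q : QPred) : Prop :=
  exists ts, rhead r = [:: (SQ q, ts)].

Definition depends (PiQ : seq Rule) (q q' : QPred) : Prop :=
  ExP (fun r => head_is r q /\ ExP (fun l => lit_sym l = Some (SQ q')) (rbody r)) PiQ.

Definition query_program (PiQ : seq Rule) (Ans : QPred) : Prop :=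
  AllP (fun r => exists q, head_is r q) PiQ /\
  AllP (fun r => AllP (fun l => match lit_sym l with
                               | Some (Sss _) | Some (SQ _) | None => True
                               | _ => False end) (rbody r)) PiQ /\
  AllP (fun r => AllP (fun a => size a.2 = sym_ar a.1) (rhead r) /\
                 AllP (fun l => match l with
                               | LPos s ts | LNeg s ts => size ts = sym_ar s
                               | LBi _ _ => True end) (rbody r)) PiQ /\
  (* QPred is the set of predicates defined in Pi^Q *)
  (forall q, ExP (fun r => head_is r q) PiQ) /\
  AllP (fun r => AllP (fun l => lit_sym l <> Some (SQ Ans)) (rbody r)) PiQ /\
  (forall q, ~ clos_trans QPred (depends PiQ) q q).

Definition qinterp (I : instance) (M : QPred -> seq Const -> Prop) (s : S) : seq Const -> Prop :=
  match s with
  | Sss P => I P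
  | SQ q => M q
  | _ => fun _ => False
  end.

(* The standard model of the non-recursive program Pi^Q over the EDB I:
   each defined relation is exactly the set of tuples derived by some
   rule whose body holds (for a non-recursive program this determines M
   uniquely, stratum by stratum). *)
Definition std_model (PiQ : seq Rule) (I : instance) (M : QPred -> seq Const -> Prop) : Prop :=
  (forall q t, M q t -> size t = qar q) /\
  forall q t, M q t <->
    ExP (fun r => exists rho : nat -> Const,
           ExP (fun a => a.1 = SQ q /\ map (eval_term id rho) a.2 = t) (rhead r) /\
           AllP (sat_lit id bintP (qinterp I M) rho) (rbody r)) PiQ.

Definition consistent_answer (IC : seq IConstr) (D : seq (Pred * seq Const))
  (PiQ : seq Rule) (Ans : QPred) (a : seq Const) : Prop :=
  forall I, is_repair IC D I -> forall M, std_model PiQ I M -> M Ans a.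

Fixpoint masks (n : nat) : seq (seq bool) :=
  if n is n'.+1 then [seq b :: m | b <- [:: true; false], m <- masks n']
  else [:: [::]].

(* For constraint c and a partition Q' u Q'' of its head atoms (mask bit
   true: the atom is in Q'):
   v_i P_i,f(x_i) v v_j Q_j,t(y_j) <- /\_i P_i,star(x_i),
        /\_{Q_j in Q'} Q_j,f(y_j), /\_{Q_k in Q''} not Q_k(y_k), phibar *)
Definition constr_rule (c : IConstr) (m : seq bool) : Rule :=
  {| rhead := [seq (Sf a.1, a.2) | a <- cbody c] ++ [seq (St a.1, a.2) | a <- chead c];
     rbody := [seq LPos (Sstar a.1) a.2 | a <- cbody c] ++
              [seq (if ba.1 then LPos (Sf ba.2.1) ba.2.2 else LNeg (SBase ba.2.1) ba.2.2)
                 | ba <- zip m (chead c)] ++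
              [seq LBi (~~ pb.1) pb.2 | pb <- cphi c] |}.

Definition constr_rules (c : IConstr) : seq Rule :=
  [seq constr_rule c m | m <- masks (size (chead c))].

Definition vars (n : nat) : seq (term Const) := [seq @TVar Const i | i <- iota 0 n].

Definition pred_rules (P : Pred) : seq Rule :=
  let x := vars (ar P) in
  [:: {| rhead := [:: (Sstar P, x)]; rbody := [:: LPos (SBase P) x] |};
      {| rhead := [:: (Sstar P, x)]; rbody := [:: LPos (St P) x] |};
      {| rhead := [:: (Sss P, x)]; rbody := [:: LPos (Sstar P) x; LNeg (Sf P) x] |};
      {| rhead := [::]; rbody := [:: LPos (St P) x; LPos (Sf P) x] |} ].

Definition repair_program (IC : seq IConstr) : seq Rule :=
  flatten [seq constr_rules c | c <- IC] ++ flatten [seq pred_rules P | P <- enum Pred].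

Definition min_r (s : S) : bool :=
  match s with SBase _ | SQ _ => false | _ => true end.
Definition min_Q (s : S) : bool :=
  match s with SQ _ => true | _ => false end.

Definition RD (U : Type) (ic : Const -> U) (rel : S -> seq U -> Prop)
  (D : seq (Pred * seq Const)) : Prop :=
  (forall u : U, exists c : Const, u = ic c) /\
  (forall c c' : Const, c <> c' -> ic c <> ic c') /\
  (forall (P : Pred) (us : seq U), size us = ar P ->
     (rel (SBase P) us <-> ExP (fun f => f.1 = P /\ us = map ic f.2) D)).

Definition entails_Ans (D : seq (Pred * seq Const)) (Pir PiQ : seq Rule)
  (Ans : QPred) (a : seq Const) : Prop :=
  forall (U : Type) (ic : Const -> U) (bU : Bi -> seq U -> Prop)
         (rel : S -> seq U -> Prop),
    inhabited U ->
    (forall s us, rel s us -> size us = sym_ar s) ->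
    (forall b cs, bU b (map ic cs) <-> bint b cs) ->
    RD ic rel D ->
    Phi ic bU sym_ar min_r Pir rel ->
    Phi ic bU sym_ar min_Q PiQ rel ->
    rel (SQ Ans) (map ic a).

End Setting.

(* Both sides of the equivalence are about Herbrand structures once the
   right facts are in place:
   - By the domain-closure and unique-names axioms of R(D), a model of
     R(D), Phi(Pi^r) and Phi(Pi^Q) is isomorphic to a structure over the
     constants themselves ([Phi_transfer]), in which the base predicates
     are exactly the facts of D.
   - In such a structure, minimality of Phi(Pi^r) forces P_star and P_ss
     to be supported by their defining rules, so P_ss is an instance that
     satisfies IC; comparing with any better instance J, encoded as a
     smaller interpretation of P_t, P_f, P_star, P_ss, shows that P_ss is
     a repair ([repair_of_model]); likewise minimality of Phi(Pi^Q) makes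
     the query predicates the standard model over P_ss ([std_model_of_model]).
   - Conversely, a repair I and the standard model M over I define a
     canonical Herbrand structure ([canonical]); it satisfies Phi(Pi^r)
     because a smaller model of Pi^r would encode an instance closer to D
     than I ([canonical_Phi_r]), and Phi(Pi^Q) because an unsupported
     derived tuple would start an infinite descent along the dependency
     relation, impossible for a non-recursive program ([canonical_Phi_Q]). *)

From mathcomp Require Import all_boot zify.
From Stdlib Require Import Relations.Relation_Operators.
From Stdlib Require Import Classical ClassicalEpsilon FunctionalExtensionality.
Set Implicit Arguments. Unset Strict Implicit. Unset Printing Implicit Defensive.

Lemma AllP_In A (P : A -> Prop) s : AllP P s <-> forall x, List.In x s -> P x.
Proof.
elim: s => [|y s IH] /=; first by split => // _ x [].
split.
- by case=> Hy /IH H x [<-|/H].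
- move=> H; split; first exact: H (or_introl erefl).
  by apply/IH => x Hx; apply: H; right.
Qed.

Lemma ExP_In A (P : A -> Prop) s : ExP P s <-> exists x, List.In x s /\ P x.
Proof.
elim: s => [|y s IH] /=; first by split => // -[x [[] _]].
split.
- case=> [Hy|/IH [x [Hx Px]]]; first by exists y; split; [left|].
  by exists x; split; [right|].
- case=> x [[<-|Hx] Px]; first by left.
  by right; apply/IH; exists x.
Qed.

Lemma ExP_intro A (P : A -> Prop) s x : List.In x s -> P x -> ExP P s.
Proof. by move=> H1 H2; apply/ExP_In; exists x. Qed.

Lemma AllP_el A (P : A -> Prop) s x : AllP P s -> List.In x s -> P x.
Proof. by move/AllP_In; apply. Qed.

Lemma AllP_iff A (P Q : A -> Prop) s :
  (forall x, P x <-> Q x) -> (AllP P s <-> AllP Q s).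
Proof. by move=> H; elim: s => //= x s ->; rewrite H. Qed.

Lemma ExP_iff A (P Q : A -> Prop) s :
  (forall x, P x <-> Q x) -> (ExP P s <-> ExP Q s).
Proof. by move=> H; elim: s => //= x s ->; rewrite H. Qed.

Lemma In_map A B (f : A -> B) s y :
  List.In y (map f s) <-> exists x, List.In x s /\ y = f x.
Proof.
elim: s => [|z s IH] /=; first by split => // -[x [[] _]].
rewrite IH; split.
- case=> [<-|[x [Hx ->]]]; first by exists z; split; [left|].
  by exists x; split; [right|].
- by case=> x [[<-|Hx] ->]; [left|right; exists x].
Qed.

Lemma In_map_intro A B (f : A -> B) s x : List.In x s -> List.In (f x) (map f s).
Proof. by move=> H; apply/In_map; exists x. Qed.

Lemma In_cat A (s1 s2 : seq A) x :
  List.In x (s1 ++ s2) <-> List.In x s1 \/ List.In x s2.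
Proof. elim: s1 => [|y s IH] /=; first by split; [right|case]. by rewrite IH; tauto. Qed.

Lemma In_flatten A (ss : seq (seq A)) x :
  List.In x (flatten ss) <-> exists s, List.In s ss /\ List.In x s.
Proof.
elim: ss => [|s ss IH] /=; first by split => // -[s [[] _]].
rewrite In_cat IH; split.
- case=> [H|[t [Ht H]]]; first by exists s; split; [left|].
  by exists t; split; [right|].
- by case=> t [[<-|Ht] H]; [left|right; exists t].
Qed.

Lemma In_mem (A : eqType) (s : seq A) x : x \in s -> List.In x s.
Proof. elim: s => [|y s IH] //=; rewrite inE => /orP [/eqP ->|/IH]; by [left|right]. Qed.

Lemma In_nth_ex A (x0 : A) (s : seq A) x :
  List.In x s -> exists i, i < size s /\ nth x0 s i = x.
Proof.
elim: s => [|y s IH] //= [->|/IH [i [Hi Hn]]]; first by exists 0.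
by exists i.+1.
Qed.

Lemma In_zip_map A B (f : A -> B) s b a :
  List.In (b, a) (zip (map f s) s) -> b = f a /\ List.In a s.
Proof.
elim: s => [|x s IH] //= [[<- <-]|/IH [-> H]]; split => //; by [left|right].
Qed.

Lemma In_zip_r A B (m : seq A) (s : seq B) y :
  size m = size s -> List.In y s -> exists b, List.In (b, y) (zip m s).
Proof.
elim: s m => [|x s IH] [|b m] //= [Hs] [<-|Hy]; first by exists b; left.
by have [b' H] := IH m Hs Hy; exists b'; right.
Qed.

Lemma masks_size n m : List.In m (masks n) -> size m = n.
Proof.
elim: n m => [|n IH] m /=; first by case=> [<-|[]].
rewrite !In_cat !In_map.
by case=> [[x [/IH <- ->]]|[[x [/IH <- ->]]|[]]].
Qed.

Lemma masks_all m : List.In m (masks (size m)).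
Proof.
elim: m => [|b m IH] /=; first by left.
by rewrite !In_cat !In_map; case: b; [left|right; left]; exists m.
Qed.

Definition bool_of (P : Prop) : bool :=
  if excluded_middle_informative P then true else false.

Lemma bool_ofT (P : Prop) : bool_of P = true <-> P.
Proof. by rewrite /bool_of; case: excluded_middle_informative. Qed.

Lemma bool_ofF (P : Prop) : bool_of P = false <-> ~ P.
Proof. by rewrite /bool_of; case: excluded_middle_informative. Qed.

(* An infinite descent along R inside a type that injects into 'I_n
   closes a cycle of R: the pigeonhole principle on the first n+1 steps. *)
Lemma descent_cycle (A : Type) (R : A -> A -> Prop) (B : A -> Prop) (n : nat)
    (h : A -> nat) :
  (forall x, h x < n) -> (forall x y, h x = h y -> x = y) ->
  (forall x, B x -> exists y, R x y /\ B y) ->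
  forall x0, B x0 -> exists x, clos_trans A R x x.
Proof.
move=> Hh Hinj Hstep x0 Bx0.
have next (x : {x | B x}) : {y : {x | B x} | R (sval x) (sval y)}.
  have [y [Rxy By]] := constructive_indefinite_description _ (Hstep _ (svalP x)).
  by exists (exist _ y By).
have Rnext x : R (sval x) (sval (sval (next x))) by case: (next x).
pose v k := sval (iter k (fun x => sval (next x)) (exist _ x0 Bx0)).
have path_v k d : clos_trans A R (v k) (v (k + d.+1)).
  elim: d => [|d IH]; first by rewrite addn1 /v iterS; apply: t_step; exact: (Rnext (iter _ _ _)).
  apply: (t_trans _ _ _ _ _ IH); rewrite [k + d.+2]addnS /v iterS; apply: t_step; exact: (Rnext (iter _ _ _)).
pose f (k : 'I_n.+1) := Ordinal (Hh (v k)).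
have /injectivePn [i [j Hij Hfij]] : ~~ injectiveb f.
  apply/negP => /injectiveP Hf; have := @leq_card _ _ f Hf; by rewrite !card_ord ltnn.
have Hvij : v i = v j by apply: Hinj; exact: (congr1 val Hfij).
case: (ltngtP i j) => Hlt.
- exists (v i); rewrite [X in clos_trans _ _ _ X]Hvij.
  by have -> : (j : nat) = i + (j - i.+1).+1 by lia.
- exists (v j); rewrite -[X in clos_trans _ _ _ X]Hvij.
  by have -> : (i : nat) = j + (i - j.+1).+1 by lia.
- by move: Hij; rewrite (val_inj Hlt) eqxx.
Qed.

Section Circumscription.
Variables (Const Bi S U : Type) (ic : Const -> U) (bU : Bi -> seq U -> Prop).
Variables (rel : S -> seq U -> Prop) (min : S -> bool) (X : S -> seq U -> Prop).

Lemma body_o_body rho ls :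
  (forall s us, min s -> X s us -> rel s us) ->
  AllP (sat_lit_o ic bU rel min X rho) ls -> AllP (sat_lit ic bU rel rho) ls.
Proof.
move=> HX /AllP_In H; apply/AllP_In => l /H.
case: l => [s ts|s ts|[] b] /=; rewrite /relo /sat_bilit //=; last by case.
- by case E: (min s) => //; apply: HX.
- by case.
Qed.

Lemma psi_In Pi r : psi ic bU rel Pi -> List.In r Pi -> sat_rule ic bU rel r.
Proof. by move=> H; apply: AllP_el. Qed.

Lemma psi_o_intro Pi :
  psi ic bU rel Pi ->
  (forall r, List.In r Pi -> forall rho,
     AllP (sat_lit_o ic bU rel min X rho) (rbody r) ->
     ExP (sat_atom_o ic rel min X rho) (rhead r)) ->
  psi_o ic bU rel min X Pi.
Proof.
move=> Hpsi H; apply/AllP_In => r Hr rho; split; first exact: H.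
exact: (psi_In Hpsi Hr).
Qed.

Lemma negated_bilit rho pb :
  sat_lit ic bU rel rho (LBi (~~ pb.1) pb.2) <-> ~ sat_bilit ic bU rho pb.
Proof.
case: pb => [[] b]; rewrite /sat_bilit /=; first tauto.
by split=> [H Hn|]; [exact: Hn H|exact: NNPP].
Qed.

Lemma negated_bilit_o rho pb :
  sat_lit_o ic bU rel min X rho (LBi (~~ pb.1) pb.2) <-> ~ sat_bilit ic bU rho pb.
Proof.
case: pb => [[] b]; rewrite /sat_bilit /=; first tauto.
by split=> [H []|H]; [apply: H|exact: NNPP].
Qed.

End Circumscription.
Arguments psi_In [Const Bi S U ic bU rel Pi r] _ _ rho _.

Lemma Phi_minimal (Const Bi S U : Type) (ic : Const -> U) (bU : Bi -> seq U -> Prop)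
    (sar : S -> nat) (min : S -> bool) Pi (rel : S -> seq U -> Prop) :
  Phi ic bU sar min Pi rel ->
  (forall s us, rel s us -> size us = sar s) ->
  forall Y, psi_o ic bU rel min (fun s us => rel s us /\ Y s us) Pi ->
  forall s, min s -> forall us, rel s us -> Y s us.
Proof.
move=> [_ HPhi] Hsz Y Hpo s Hs us Hr; apply: NNPP => HY; apply: HPhi.
exists (fun s us => rel s us /\ Y s us); split; first by move=> s' us' [/Hsz].
split; first by move=> s' _ us' [].
by split=> //; exists s, us; do 2 split=> //; case.
Qed.

Section Transfer.
Variables (Const : finType) (Bi S U : Type) (ic : Const -> U) (bU : Bi -> seq U -> Prop).
Variable bint : Bi -> seq Const -> bool.
Hypothesis ic_inj : injective ic.
Hypothesis HbU : forall b cs, bU b (map ic cs) <-> bint b cs.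
Variables (rel : S -> seq U -> Prop) (min : S -> bool) (X' : S -> seq Const -> Prop).
Let rel' : S -> seq Const -> Prop := fun s t => rel s (map ic t).
Let X : S -> seq U -> Prop := fun s us => exists t, us = map ic t /\ X' s t.

Lemma map_eval rho' ts :
  map (eval_term ic (fun n => ic (rho' n))) ts = map ic (map (eval_term id rho') ts).
Proof. by rewrite -map_comp; apply: eq_map => -[]. Qed.

Lemma batom_tr rho' b :
  sat_batom ic bU (fun n => ic (rho' n)) b <-> sat_batom id (bintP bint) rho' b.
Proof.
case: b => [[n|c] [m|d]|p ts] /=; last by rewrite map_eval HbU.
all: by split; [move/ic_inj|move=> ->].
Qed.

Lemma relo_tr s t : relo rel min X s (map ic t) <-> relo rel' min X' s t.
Proof.
rewrite /relo; case: (min s) => //.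
by split=> [[t0 [/(inj_map ic_inj) ->]]|H] //; exists t.
Qed.

Lemma lit_tr rho' l :
  sat_lit ic bU rel (fun n => ic (rho' n)) l <-> sat_lit id (bintP bint) rel' rho' l.
Proof.
case: l => [s ts|s ts|[] b] /=; rewrite /rel' /sat_bilit ?map_eval //=.
- exact: batom_tr.
- by rewrite batom_tr.
Qed.

Lemma lit_o_tr rho' l :
  sat_lit_o ic bU rel min X (fun n => ic (rho' n)) l <->
  sat_lit_o id (bintP bint) rel' min X' rho' l.
Proof.
case: l => [s ts|s ts|[] b] /=; rewrite ?map_eval ?relo_tr //.
- exact: batom_tr.
- by rewrite batom_tr.
Qed.

Lemma atom_tr rho' a :
  sat_atom ic rel (fun n => ic (rho' n)) a <-> sat_atom id rel' rho' a.
Proof. by rewrite /sat_atom /rel' map_eval. Qed.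

Lemma atom_o_tr rho' a :
  sat_atom_o ic rel min X (fun n => ic (rho' n)) a <-> sat_atom_o id rel' min X' rho' a.
Proof. by rewrite /sat_atom_o map_eval relo_tr. Qed.

End Transfer.

Lemma assignment_factor (Const U : Type) (ic : Const -> U) (rho : nat -> U) :
  (forall u, exists c, u = ic c) -> exists rho' : nat -> Const, rho = (fun n => ic (rho' n)).
Proof.
move=> ic_surj.
exists (fun n => proj1_sig (constructive_indefinite_description _ (ic_surj (rho n)))).
by apply: functional_extensionality => n; case: constructive_indefinite_description.
Qed.

Lemma Phi_transfer (Const : finType) (Bi S U : Type) (ic : Const -> U)
    (bU : Bi -> seq U -> Prop) (bint : Bi -> seq Const -> bool) sar min Pi
    (rel : S -> seq U -> Prop) :
  injective ic -> (forall u, exists c, u = ic c) ->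
  (forall b cs, bU b (map ic cs) <-> bint b cs) ->
  Phi ic bU sar min Pi rel ->
  Phi id (bintP bint) sar min Pi (fun s t => rel s (map ic t)).
Proof.
move=> Hinj Hsurj HbU [Hpsi HPhi]; split.
  apply/AllP_In => r Hr rho' Hb; have := psi_In Hpsi Hr (fun n => ic (rho' n)).
  by rewrite (AllP_iff _ (lit_tr Hinj HbU rel rho')) (ExP_iff _ (atom_tr ic rel rho')); apply.
case=> X' [Hsz [Hsub [[s [t [Hs [Hrt HX]]]] Hpo]]]; apply: HPhi.
exists (fun s us => exists t, us = map ic t /\ X' s t); split.
  by move=> s' us [t' [-> /Hsz]]; rewrite size_map.
split; first by move=> s' Hs' us [t' [-> /(Hsub s' Hs')]].
split.
  exists s, (map ic t); do 2 split=> //.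
  by case=> t' [/(inj_map Hinj) <-].
apply/AllP_In => r Hr rho; have [rho' ->] := assignment_factor rho Hsurj.
have [H1 _] := AllP_el Hpo Hr rho'; split; last exact: (psi_In Hpsi Hr).
rewrite (AllP_iff _ (lit_o_tr Hinj HbU rel min X' rho')).
by rewrite (ExP_iff _ (atom_o_tr Hinj rel min X' rho')).
Qed.

Section RepairProgram.
Variables (Const Pred : finType) (QPred Bi : Type) (ar : Pred -> nat)
  (bint : Bi -> seq Const -> bool) (IC : seq (constr Pred Const Bi)).
Local Notation S := (sym Pred QPred).
Local Notation Pir := (repair_program QPred ar IC).
Local Notation ev := (eval_term id).
Local Notation prules := (pred_rules Const QPred Bi ar).

Lemma repair_rule_cases r : List.In r Pir ->
  (exists c m, [/\ List.In c IC, List.In m (masks (size (chead c))) &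
                   r = constr_rule QPred c m]) \/
  (exists P, List.In r (prules P)).
Proof.
rewrite /repair_program In_cat !In_flatten.
case=> [[s [/In_map [c [Hc ->]] /In_map [m [Hm ->]]]]|[s [/In_map [P [_ ->]] H]]].
- by left; exists c, m.
- by right; exists P.
Qed.

Lemma In_constr_rule c m : List.In c IC -> List.In m (masks (size (chead c))) ->
  List.In (constr_rule QPred c m) Pir.
Proof.
move=> Hc Hm; rewrite /repair_program In_cat In_flatten; left.
by exists (constr_rules QPred c); split; apply: In_map_intro.
Qed.

Lemma In_pred_rule P r : List.In r (prules P) -> List.In r Pir.
Proof.
move=> H; rewrite /repair_program In_cat !In_flatten; right.
exists (prules P); split=> //; apply/In_map_intro/In_mem/mem_enum.
Qed.

Lemma vars_nth (c0 : Const) t n : size t = n ->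
  map (ev (fun i => nth c0 t i)) (vars Const n) = t.
Proof. by move=> <-; rewrite /vars -map_comp -[RHS](mkseq_nth c0); apply: eq_map. Qed.

Lemma body_constr (F : lit S Const Bi -> Prop) (c : constr Pred Const Bi) m :
  AllP F (rbody (constr_rule QPred c m)) <->
  [/\ forall a, List.In a (cbody c) -> F (LPos (Sstar a.1) a.2),
      forall ba, List.In ba (zip m (chead c)) ->
        F (if ba.1 then LPos (Sf ba.2.1) ba.2.2 else LNeg (SBase ba.2.1) ba.2.2) &
      forall pb, List.In pb (cphi c) -> F (LBi (~~ pb.1) pb.2)].
Proof.
rewrite AllP_In /=; split.
- move=> H; split=> [a Ha|ba Hba|pb Hpb]; apply: H; rewrite !In_cat.
  + by left; apply: (In_map_intro (fun a => LPos (Sstar a.1) a.2)).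
  + right; left; apply: (In_map_intro (fun ba : bool * (Pred * seq (term Const)) =>
      if ba.1 then LPos (Sf ba.2.1) ba.2.2 else LNeg (SBase ba.2.1) ba.2.2)) Hba.
  + by right; right; apply: (In_map_intro (fun pb : bool * batom Const Bi => LBi (~~ pb.1) pb.2)).
- case=> H1 H2 H3 l; rewrite !In_cat.
  by case=> [/In_map [a [Ha ->]]|[/In_map [a [Ha ->]]|/In_map [a [Ha ->]]]]; auto.
Qed.

Lemma head_constr (F : S * seq (term Const) -> Prop) (c : constr Pred Const Bi) m :
  ExP F (rhead (constr_rule QPred c m)) <->
  (exists a, List.In a (cbody c) /\ F (Sf a.1, a.2)) \/
  (exists a, List.In a (chead c) /\ F (St a.1, a.2)).
Proof.
rewrite ExP_In /=; split.
- case=> x [/In_cat [/In_map [a [Ha ->]]|/In_map [a [Ha ->]]] Hx].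
  + by left; exists a.
  + by right; exists a.
- case=> -[a [Ha Hx]].
  + exists (Sf a.1, a.2); split=> //; rewrite In_cat; left.
    exact: (In_map_intro (fun a : Pred * seq (term Const) => (Sf a.1, a.2))).
  + exists (St a.1, a.2); split=> //; rewrite In_cat; right.
    exact: (In_map_intro (fun a : Pred * seq (term Const) => (St a.1, a.2))).
Qed.

(* The boolean mask selecting, among the head atoms of c, those for which
   Q_f holds under rho: the partition Q' u Q'' whose rule applies. *)
Definition mask_of (F : Pred -> seq Const -> Prop) (c : constr Pred Const Bi)
    (rho : nat -> Const) : seq bool :=
  map (fun a : Pred * seq (term Const) => bool_of (F a.1 (map (ev rho) a.2))) (chead c).

Lemma mask_ofP F c rho : List.In (mask_of F c rho) (masks (size (chead c))).
Proof. by have := masks_all (mask_of F c rho); rewrite size_map. Qed.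

Lemma In_zip_mask F c rho b a :
  List.In (b, a) (zip (mask_of F c rho) (chead c)) ->
  b = bool_of (F a.1 (map (ev rho) a.2)) /\ List.In a (chead c).
Proof. exact: In_zip_map. Qed.

Variable rel : S -> seq Const -> Prop.

Lemma pred_rules_sound (c0 : Const) P t :
  psi id (bintP bint) rel Pir -> size t = ar P ->
  [/\ rel (SBase P) t -> rel (Sstar P) t,
      rel (St P) t -> rel (Sstar P) t,
      rel (Sstar P) t -> ~ rel (Sf P) t -> rel (Sss P) t &
      ~ (rel (St P) t /\ rel (Sf P) t)].
Proof.
move=> Hpsi Ht.
have R r : List.In r (prules P) -> sat_rule id (bintP bint) rel r.
  by move/In_pred_rule; apply: psi_In.
have := R _ (or_introl erefl) (nth c0 t); have := R _ (or_intror (or_introl erefl)) (nth c0 t).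
have := R _ (or_intror (or_intror (or_introl erefl))) (nth c0 t).
have := R _ (or_intror (or_intror (or_intror (or_introl erefl)))) (nth c0 t).
rewrite /= /sat_atom /= (vars_nth c0 Ht) => R4 R3 R2 R1.
split=> [H|H|H1 H2|[H1 H2]].
- by case: (R1 (conj H I)).
- by case: (R2 (conj H I)).
- by case: (R3 (conj H1 (conj H2 I))).
- exact: (R4 (conj H1 (conj H2 I))).
Qed.

Lemma psi_repair_intro :
  (forall c m rho, List.In c IC -> List.In m (masks (size (chead c))) ->
     AllP (sat_lit id (bintP bint) rel rho) (rbody (constr_rule QPred c m)) ->
     ExP (sat_atom id rel rho) (rhead (constr_rule QPred c m))) ->
  (forall P t, rel (SBase P) t -> rel (Sstar P) t) ->
  (forall P t, rel (St P) t -> rel (Sstar P) t) ->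
  (forall P t, rel (Sstar P) t -> ~ rel (Sf P) t -> rel (Sss P) t) ->
  (forall P t, ~ (rel (St P) t /\ rel (Sf P) t)) ->
  psi id (bintP bint) rel Pir.
Proof.
move=> Hc H1 H2 H3 H4; apply/AllP_In => r Hr rho.
case: (repair_rule_cases Hr) => [[c [m [Hc' Hm ->]]]|[P HP]]; first exact: Hc.
case: HP => [<-|[<-|[<-|[<-|[]]]]] /=.
- by case=> /H1 H _; left.
- by case=> /H2 H _; left.
- by case=> A [B _]; left; apply: H3.
- by case=> A [B _]; apply: (H4 P _ (conj A B)).
Qed.

(* psi^o(Pi^r), likewise; the program constraint needs no ^o-check since
   it has an empty head. *)
Lemma psi_o_repair_intro (min : S -> bool) (X : S -> seq Const -> Prop) :
  psi id (bintP bint) rel Pir ->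
  (forall s us, min s -> X s us -> rel s us) ->
  (forall c m rho, List.In c IC -> List.In m (masks (size (chead c))) ->
     AllP (sat_lit_o id (bintP bint) rel min X rho) (rbody (constr_rule QPred c m)) ->
     ExP (sat_atom_o id rel min X rho) (rhead (constr_rule QPred c m))) ->
  (forall P t, relo rel min X (SBase P) t -> relo rel min X (Sstar P) t) ->
  (forall P t, relo rel min X (St P) t -> relo rel min X (Sstar P) t) ->
  (forall P t, relo rel min X (Sstar P) t -> ~ relo rel min X (Sf P) t ->
     ~ rel (Sf P) t -> relo rel min X (Sss P) t) ->
  psi_o id (bintP bint) rel min X Pir.
Proof.
move=> Hpsi HX Hc H1 H2 H3; apply: psi_o_intro => // r Hr rho.
case: (repair_rule_cases Hr) => [[c [m [Hc' Hm ->]]]|[P HP]]; first exact: Hc.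
move: HP => [E|[E|[E|[E|[]]]]]; rewrite -E /=.
- by case=> /H1 H _; left.
- by case=> /H2 H _; left.
- by case=> A [[B C] _]; left; apply: H3.
- by move=> Hb; have := psi_In Hpsi Hr rho; rewrite -E; apply; apply: (body_o_body HX).
Qed.

End RepairProgram.

Section ModelToRepair.
Variables (Const Pred : finType) (QPred Bi : Type) (ar : Pred -> nat) (qar : QPred -> nat)
  (bint : Bi -> seq Const -> bool) (IC : seq (constr Pred Const Bi))
  (D : seq (Pred * seq Const)) (c0 : Const).
Local Notation S := (sym Pred QPred).
Local Notation Pir := (repair_program QPred ar IC).
Local Notation ev := (eval_term id).
Local Notation mr := (@min_r Pred QPred).

Variable rel : S -> seq Const -> Prop.
Hypothesis Hsz : forall s us, rel s us -> size us = sym_ar ar qar s.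
Hypothesis HB : forall P t, rel (SBase P) t <-> inD D P t.
Hypothesis HPhi : Phi id (bintP bint) (sym_ar ar qar) mr Pir rel.

Let Hpsi := HPhi.1.

Lemma star_of_base P t : rel (SBase P) t -> rel (Sstar P) t.
Proof. by move=> H; case: (pred_rules_sound c0 Hpsi (Hsz H)) => [/(_ H)]. Qed.

Lemma star_of_t P t : rel (St P) t -> rel (Sstar P) t.
Proof. by move=> H; case: (pred_rules_sound c0 Hpsi (Hsz H)) => [_ /(_ H)]. Qed.

Lemma ss_of_star P t : rel (Sstar P) t -> ~ rel (Sf P) t -> rel (Sss P) t.
Proof. by move=> H; case: (pred_rules_sound c0 Hpsi (Hsz H)) => [_ _ /(_ H)]. Qed.

Lemma t_f_exclusive P t : ~ (rel (St P) t /\ rel (Sf P) t).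
Proof. by move=> [H H']; case: (pred_rules_sound c0 Hpsi (Hsz H)) => [_ _ _]; apply. Qed.

(* By minimality, P_star and P_ss hold only where their rules force them. *)
Definition supported (s : S) : seq Const -> Prop :=
  match s with
  | Sstar P => fun t => rel (SBase P) t \/ rel (St P) t
  | Sss P => fun t => rel (Sstar P) t /\ ~ rel (Sf P) t
  | _ => fun _ => True
  end.

Lemma all_supported s : mr s -> forall t, rel s t -> supported s t.
Proof.
apply: (Phi_minimal HPhi Hsz); apply: psi_o_repair_intro => //.
- by move=> s' us _ [].
- move=> c m rho Hc Hm Hb.
  have := psi_In Hpsi (In_constr_rule QPred ar Hc Hm) rho.
  move=> /(_ (body_o_body (fun s us (_ : mr s) (H : rel s us /\ supported s us) => H.1) Hb)).
  by rewrite !head_constr; case=> -[a [Ha Hx]]; [left|right]; exists a.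
- by move=> P t /= H; split; [exact: star_of_base|left].
- by move=> P t /= [H _]; split; [exact: star_of_t|right].
- by move=> P t /= [H _] H1 H2; split; [exact: ss_of_star|split].
Qed.

Lemma supported_star P t : rel (Sstar P) t -> rel (SBase P) t \/ rel (St P) t.
Proof. exact: (all_supported (s := Sstar P)). Qed.

Lemma supported_ss P t : rel (Sss P) t -> rel (Sstar P) t /\ ~ rel (Sf P) t.
Proof. exact: (all_supported (s := Sss P)). Qed.

Definition model_inst : instance Const Pred := fun P t => rel (Sss P) t.

(* If a constraint were violated, the rule for the partition given by the
   P_f would fire, but its head is refuted by the support facts. *)
Lemma model_inst_IC : inst_sat_IC bint model_inst IC.
Proof.
apply/AllP_In => c Hc rho Hbody; apply: NNPP => Hn.
have Hnh : ~ ExP (fun a => model_inst a.1 (map (ev rho) a.2)) (chead c).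
  by move=> H; apply: Hn; left.
have Hnp : ~ ExP (sat_bilit id (bintP bint) rho) (cphi c) by move=> H; apply: Hn; right.
have Hb := AllP_el Hbody.
pose m := mask_of (fun P t => rel (Sf P) t) c rho.
have Hbd : AllP (sat_lit id (bintP bint) rel rho) (rbody (constr_rule QPred c m)).
  apply/body_constr; split.
  - by move=> a /Hb /supported_ss [].
  - move=> [b a] /In_zip_mask [-> Ha] /=; case E: bool_of; first exact/bool_ofT.
    move/bool_ofF: E => E /= /star_of_base Hs; apply: Hnh; apply: (ExP_intro Ha).
    exact: ss_of_star.
  - move=> pb Hpb; apply/negated_bilit => H; exact/Hnp/(ExP_intro Hpb).
move: (psi_In Hpsi (In_constr_rule QPred ar Hc (mask_ofP _ c rho)) rho Hbd).
rewrite head_constr => -[[a [Ha Hx]]|[a [Ha Hx]]].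
- by have [_] := supported_ss (Hb a Ha); apply.
- apply: Hnh; apply: (ExP_intro Ha); apply: ss_of_star; first exact: star_of_t.
  by move=> Hf; apply: (@t_f_exclusive a.1 (map (ev rho) a.2)).
Qed.

(* Any instance J with Delta(D,J) inside Delta(D,model_inst) gives an
   interpretation of the minimized predicates: the one below. *)
Definition from_inst (J : instance Const Pred) (s : S) : seq Const -> Prop :=
  match s with
  | St P => fun t => J P t /\ ~ inD D P t
  | Sf P => fun t => inD D P t /\ ~ J P t
  | Sstar P | Sss P => fun t => inD D P t \/ (J P t /\ ~ inD D P t)
  | _ => fun _ => True
  end.

Section Comparison.
Variable J : instance Const Pred.
Hypothesis HJ : inst_sat_IC bint J IC.
Hypothesis HDel : forall P t, Delta D J P t -> Delta D model_inst P t.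

Let Xo : S -> seq Const -> Prop := fun s us => rel s us /\ from_inst J s us.

(* The constraint rules remain true when the minimized predicates are cut
   down to from_inst J: either a body atom is missing from J, and then a
   P_f holds, or J satisfies the constraint and then some Q_t holds. *)
Lemma from_inst_constr c m rho :
  List.In c IC -> List.In m (masks (size (chead c))) ->
  AllP (sat_lit_o id (bintP bint) rel mr Xo rho) (rbody (constr_rule QPred c m)) ->
  ExP (sat_atom_o id rel mr Xo rho) (rhead (constr_rule QPred c m)).
Proof.
move=> Hc Hm /body_constr [Hb1 Hb2 Hb3]; rewrite head_constr.
case: (classic (exists a, List.In a (cbody c) /\ ~ J a.1 (map (ev rho) a.2))).
  case=> a [Ha HnJ]; left; exists a; split=> //.
  have [Hs [HD|[HJa _]]] := Hb1 a Ha; last by [].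
  have HDI : Delta D model_inst a.1 (map (ev rho) a.2).
    by apply: HDel => Hiff; apply: HnJ; apply/Hiff.
  rewrite /sat_atom_o /=; split; last by split.
  by apply: NNPP => Hf; apply: HDI; split=> // _; exact: ss_of_star.
move=> Hall.
have Hbody : AllP (fun a => J a.1 (map (ev rho) a.2)) (cbody c).
  by apply/AllP_In => a Ha; apply: NNPP => H; apply: Hall; exists a.
case: (AllP_el HJ Hc rho Hbody) => [/ExP_In [a [Ha HJa]]|/ExP_In [pb [Hpb Hsat]]].
- right; exists a; split=> //.
  have [b Hba] := In_zip_r (masks_size Hm) Ha.
  have := Hb2 _ Hba; case: b Hba => Hba /=; first by case=> _ [].
  move=> [HnB _].
  have HnD : ~ inD D a.1 (map (ev rho) a.2) by move/HB.
  have HDI : Delta D model_inst a.1 (map (ev rho) a.2).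
    by apply: HDel => Hiff; apply: HnD; apply/Hiff.
  have Hss : rel (Sss a.1) (map (ev rho) a.2).
    by apply: NNPP => Hn; apply: HDI; split=> // Hd; case: HnD.
  have [Hst _] := supported_ss Hss.
  rewrite /sat_atom_o /=; split; last by split.
  by case: (supported_star Hst) => // /HB.
- by case/negated_bilit_o: (Hb3 _ Hpb).
Qed.

Lemma model_inst_minimal P t : Delta D model_inst P t -> Delta D J P t.
Proof.
have HY : forall s, mr s -> forall t, rel s t -> from_inst J s t.
  apply: (Phi_minimal HPhi Hsz); apply: psi_o_repair_intro => //.
  - by move=> s' us _ [].
  - exact: from_inst_constr.
  - by move=> P' t' /= H; split; [exact: star_of_base|left; exact/HB].
  - by move=> P' t' /= [H [HJt HnD]]; split; [exact: star_of_t|right].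
  - by move=> P' t' /= [H Hsupp] H1 H2; split; [exact: ss_of_star|].
move=> HDI Hiff; apply: HDI; split.
- move=> HD; apply: NNPP => Hn.
  have Hst : rel (Sstar P) t by apply/star_of_base/HB.
  have Hf : rel (Sf P) t by apply: NNPP => Hf; apply: Hn; exact: ss_of_star.
  by have [_ /(_ (proj1 Hiff HD))] := HY (Sf P) erefl t Hf.
- move=> Hss; case: (HY (Sss P) erefl t Hss) => // -[HJt HnD].
  by case: HnD; apply/Hiff.
Qed.

End Comparison.

Lemma repair_of_model : is_repair ar bint IC D model_inst.
Proof.
split; first by move=> P t /Hsz.
split; first exact: model_inst_IC.
by move=> J _ HJ HDel P t; apply: model_inst_minimal.
Qed.

End ModelToRepair.

(* The query program reads only the P_ss and its own predicates, so its
   rule bodies have the same value in any structure that agrees with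
   qinterp I M on those predicates. *)
Section QueryProgram.
Variables (Const Pred : finType) (QPred Bi : Type) (ar : Pred -> nat) (qar : QPred -> nat)
  (bint : Bi -> seq Const -> bool) (PiQ : seq (rule (sym Pred QPred) Const Bi)) (Ans : QPred).
Hypothesis HQ : query_program ar qar PiQ Ans.
Local Notation S := (sym Pred QPred).

Lemma query_body_equiv (rel : S -> seq Const -> Prop) (I : instance Const Pred) M r rho :
  (forall P t, rel (Sss P) t <-> I P t) -> (forall q t, rel (SQ q) t <-> M q t) ->
  List.In r PiQ ->
  (AllP (sat_lit id (bintP bint) rel rho) (rbody r) <->
   AllP (sat_lit id (bintP bint) (qinterp I M) rho) (rbody r)).
Proof.
move=> H1 H2 Hr; have := AllP_el (proj1 (proj2 HQ)) Hr.
elim: (rbody r) => //= l ls IH [Hl /IH ->]; apply: and_iff_compat_r.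
by case: l Hl => [s ts|s ts|b ba] //=; case: s => // x _; rewrite ?H1 ?H2.
Qed.

Lemma query_rule_head r : List.In r PiQ -> exists q ts, rhead r = [:: (SQ q, ts)].
Proof. by move=> Hr; case: (AllP_el (proj1 HQ) Hr) => q [ts E]; exists q, ts. Qed.

End QueryProgram.

(* From a Herbrand model of Phi(Pi^Q) to the standard model: by
   minimality every derived tuple is produced by a rule whose body holds,
   and conversely every such tuple is derived since psi(Pi^Q) holds. *)
Section ModelToStdModel.
Variables (Const Pred : finType) (QPred Bi : Type) (ar : Pred -> nat) (qar : QPred -> nat)
  (bint : Bi -> seq Const -> bool) (PiQ : seq (rule (sym Pred QPred) Const Bi)) (Ans : QPred).
Hypothesis HQ : query_program ar qar PiQ Ans.
Local Notation S := (sym Pred QPred).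
Local Notation mq := (@min_Q Pred QPred).

Variable rel : S -> seq Const -> Prop.
Hypothesis Hsz : forall s us, rel s us -> size us = sym_ar ar qar s.
Hypothesis HPhi : Phi id (bintP bint) (sym_ar ar qar) mq PiQ rel.

Let I : instance Const Pred := fun P t => rel (Sss P) t.
Let M : QPred -> seq Const -> Prop := fun q t => rel (SQ q) t.

Definition derived (q : QPred) (t : seq Const) : Prop :=
  ExP (fun r => exists rho : nat -> Const,
         ExP (fun a => a.1 = SQ q /\ map (eval_term id rho) a.2 = t) (rhead r) /\
         AllP (sat_lit id (bintP bint) (qinterp I M) rho) (rbody r)) PiQ.

Let body_equiv r rho := @query_body_equiv _ _ _ _ _ _ bint _ _ HQ rel I M r rho
  (fun _ _ => iff_refl _) (fun _ _ => iff_refl _).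

Lemma all_derived q t : rel (SQ q) t -> derived q t.
Proof.
pose Y (s : S) := match s with SQ q => derived q | _ => fun _ => True end.
move=> Hq; suff HY : forall s, mq s -> forall t, rel s t -> Y s t by exact: (HY (SQ q) erefl t Hq).
apply: (Phi_minimal HPhi Hsz); apply: psi_o_intro; first exact: HPhi.1.
move=> r Hr rho Hbo.
have Hb := body_o_body (fun s us (_ : mq s) (H : rel s us /\ Y s us) => H.1) Hbo.
have [q' [ts E]] := query_rule_head HQ Hr.
have := psi_In HPhi.1 Hr rho Hb; rewrite E /= => -[Hh|[]]; left.
rewrite /sat_atom_o /relo /=; split=> //.
apply: (ExP_intro Hr); exists rho; split; first by rewrite E; left.
exact/body_equiv.
Qed.

Lemma std_model_of_model : std_model qar bint PiQ I M.
Proof.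
split; first by move=> q t /Hsz.
move=> q t; split; first exact: all_derived.
move/ExP_In => [r [Hr [rho [Hh Hb]]]].
have := psi_In HPhi.1 Hr rho (proj2 (body_equiv rho Hr) Hb).
have [q' [ts E]] := query_rule_head HQ Hr; rewrite E /= in Hh * => -[Ha|[]].
by case: Hh => [[[<-] <-]|[]].
Qed.

End ModelToStdModel.

Section RepairToModel.
Variables (Const Pred : finType) (QPred Bi : Type) (ar : Pred -> nat) (qar : QPred -> nat)
  (bint : Bi -> seq Const -> bool) (IC : seq (constr Pred Const Bi))
  (D : seq (Pred * seq Const)) (PiQ : seq (rule (sym Pred QPred) Const Bi)) (Ans : QPred)
  (c0 : Const).
Hypothesis HD : wf_db ar D.
Hypothesis HQ : query_program ar qar PiQ Ans.
Local Notation S := (sym Pred QPred).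
Local Notation Pir := (repair_program QPred ar IC).
Local Notation ev := (eval_term id).
Local Notation mr := (@min_r Pred QPred).
Local Notation mq := (@min_Q Pred QPred).

Variables (I : instance Const Pred) (M : QPred -> seq Const -> Prop).
Hypothesis HI : is_repair ar bint IC D I.
Hypothesis HM : std_model qar bint PiQ I M.

Definition canonical (s : S) : seq Const -> Prop :=
  match s with
  | SBase P => inD D P
  | St P => fun t => I P t /\ ~ inD D P t
  | Sf P => fun t => inD D P t /\ ~ I P t
  | Sstar P => fun t => inD D P t \/ I P t
  | Sss P => I P
  | SQ q => M q
  end.

Lemma inD_size P t : inD D P t -> size t = ar P.
Proof. by move/ExP_In => [f [Hf [<- <-]]]; exact: (AllP_el HD Hf). Qed.

Lemma repair_size P t : I P t -> size t = ar P.
Proof. exact: HI.1. Qed.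

Lemma canonical_size s us : canonical s us -> size us = sym_ar ar qar s.
Proof.
case: s => [P|P|P|P|P|q] /=.
- exact: inD_size.
- by case=> /repair_size.
- by case=> /inD_size.
- by case=> [/inD_size|/repair_size].
- exact: repair_size.
- exact: HM.1.
Qed.

(* A constraint rule can only have a true body when some body atom was
   deleted or some head atom inserted, since I satisfies IC. *)
Lemma canonical_psi_r : psi id (bintP bint) canonical Pir.
Proof.
apply: psi_repair_intro.
- move=> c m rho Hc Hm /body_constr [Hb1 Hb2 Hb3]; apply: NNPP; rewrite head_constr => Hn.
  have Hx : forall a, List.In a (cbody c) -> I a.1 (map (ev rho) a.2).
    move=> a Ha; case: (Hb1 a Ha) => // HDa; apply: NNPP => HnI.
    by apply: Hn; left; exists a.
  case: (AllP_el HI.2.1 Hc rho (proj2 (AllP_In _ _) Hx)).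
  + case/ExP_In => a [Ha HIa]; have [b Hba] := In_zip_r (masks_size Hm) Ha.
    have := Hb2 _ Hba; case: b Hba => Hba /=; first by case.
    by move=> HnD; apply: Hn; right; exists a.
  + by case/ExP_In => pb [Hpb]; apply/negated_bilit/(Hb3 _ Hpb).
- by move=> P t /= H; left.
- by move=> P t /= [H _]; right.
- by move=> P t /= [H|H] Hn //; apply: NNPP => HnI; apply: Hn.
- by move=> P t /= [[H1 H2] [H3 H4]].
Qed.

Section CanonicalMinimal.
Variable X : S -> seq Const -> Prop.
Hypothesis HXs : forall s us, X s us -> size us = sym_ar ar qar s.
Hypothesis HXsub : forall s, mr s -> forall us, X s us -> canonical s us.
Hypothesis Hpo : psi_o id (bintP bint) canonical mr X Pir.

Lemma X_t P t : X (St P) t -> I P t /\ ~ inD D P t.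
Proof. exact: (@HXsub (St P) erefl t). Qed.

Lemma X_f P t : X (Sf P) t -> inD D P t /\ ~ I P t.
Proof. exact: (@HXsub (Sf P) erefl t). Qed.

Lemma X_pred_rules P t : size t = ar P ->
  [/\ inD D P t -> X (Sstar P) t,
      X (St P) t -> X (Sstar P) t &
      X (Sstar P) t -> ~ X (Sf P) t -> ~ canonical (Sf P) t -> X (Sss P) t].
Proof.
move=> Ht.
have R r : List.In r (pred_rules Const QPred Bi ar P) ->
    sat_rule_o id (bintP bint) canonical mr X r.
  by move/(In_pred_rule IC); apply: AllP_el.
have := proj1 (R _ (or_introl erefl) (nth c0 t)).
have := proj1 (R _ (or_intror (or_introl erefl)) (nth c0 t)).
have := proj1 (R _ (or_intror (or_intror (or_introl erefl))) (nth c0 t)).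
rewrite /= /sat_atom_o /relo /= (vars_nth c0 Ht) => R3 R2 R1.
split=> [H|H|H1 H2 H3].
- by case: (R1 (conj H Logic.I)).
- by case: (R2 (conj H Logic.I)).
- by case: (R3 (conj H1 (conj (conj H2 H3) Logic.I))).
Qed.

Definition X_inst : instance Const Pred :=
  fun P t => (inD D P t \/ X (St P) t) /\ ~ X (Sf P) t.

Lemma X_inst_wf : wf_inst ar X_inst.
Proof. by move=> P t [[/inD_size|/HXs] ->]. Qed.

(* X_inst satisfies IC: a violation would make the body of the constraint
   rule for the partition given by the X-deletions true under ^o. *)
Lemma X_inst_IC : inst_sat_IC bint X_inst IC.
Proof.
apply/AllP_In => c Hc rho Hbody; apply: NNPP => Hn.
have Hnh : ~ ExP (fun a => X_inst a.1 (map (ev rho) a.2)) (chead c).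
  by move=> H; apply: Hn; left.
have Hnp : ~ ExP (sat_bilit id (bintP bint) rho) (cphi c) by move=> H; apply: Hn; right.
have Hb := AllP_el Hbody.
pose m := mask_of (fun P t => X (Sf P) t) c rho.
have [Hr _] := AllP_el Hpo (In_constr_rule QPred ar Hc (mask_ofP (fun P t => X (Sf P) t) c rho)) rho.
have Hbd : AllP (sat_lit_o id (bintP bint) canonical mr X rho) (rbody (constr_rule QPred c m)).
  apply/body_constr; split.
  - move=> a Ha /=; rewrite /relo /=.
    have [[HDa|HXa] _] := Hb a Ha; have [F1 F2 _] := X_pred_rules (X_inst_wf (Hb a Ha)).
    + exact: F1.
    + exact: F2.
  - move=> [b a] /In_zip_mask [-> Ha] /=; case E: bool_of; rewrite /relo /=.
    + exact/bool_ofT.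
    + move/bool_ofF: E => E.
      have HnD : ~ inD D a.1 (map (ev rho) a.2).
        by move=> HDa; apply: Hnh; apply: (ExP_intro Ha); split=> //; left.
      by split.
  - move=> pb Hpb; apply/negated_bilit_o => H; exact/Hnp/(ExP_intro Hpb).
move: (Hr Hbd); rewrite head_constr => -[[a [Ha Hx]]|[a [Ha Hx]]].
- by case: (Hb a Ha) => _; apply.
- apply: Hnh; apply: (ExP_intro Ha); split; first by right.
  by move=> /X_f [HDa _]; case: (X_t Hx).
Qed.

Lemma X_inst_Delta P t : Delta D X_inst P t -> Delta D I P t.
Proof.
move=> HDJ HIiff; apply: HDJ; split.
- by move=> HDa; split; [left|move/X_f => [_]; apply; apply/HIiff].
- by case=> -[//|/X_t [HIa HnD]] _; case: HnD; apply/HIiff.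
Qed.

(* Hence, I being a repair, X coincides with the canonical interpretation
   on the minimized predicates. *)
Lemma X_above_canonical s : mr s -> forall t, canonical s t -> X s t.
Proof.
have HDI := HI.2.2 _ X_inst_wf X_inst_IC X_inst_Delta.
have Ht P t : I P t -> ~ inD D P t -> X (St P) t.
  move=> HIa HnD; apply: NNPP => Hn; apply: (HDI P t).
    by move=> Hiff; apply: HnD; apply/Hiff.
  by split=> [//|[[//|//] _]].
have Hf P t : inD D P t -> ~ I P t -> X (Sf P) t.
  move=> HDa HnI; apply: NNPP => Hn; apply: (HDI P t).
    by move=> Hiff; apply: HnI; apply/Hiff.
  by split=> // _; split; first by left.
have Hstar P t : inD D P t \/ I P t -> X (Sstar P) t.
  move=> H; have Hs : size t = ar P by case: H => [/inD_size|/repair_size].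
  have [F1 F2 _] := X_pred_rules Hs.
  case: (classic (inD D P t)) => [/F1 //|HnD].
  by case: H => // HIa; apply/F2/Ht.
case: s => //= P _ t.
- by case; apply: Ht.
- by case; apply: Hf.
- exact: Hstar.
- move=> HIa; have [_ _ F3] := X_pred_rules (repair_size HIa).
  apply: F3; first by apply: Hstar; right.
  + by move/X_f => [_].
  + by case.
Qed.

End CanonicalMinimal.

Lemma canonical_Phi_r : Phi id (bintP bint) (sym_ar ar qar) mr Pir canonical.
Proof.
split; first exact: canonical_psi_r.
case=> X [HXs [HXsub [[s [t [Hs [Ht HnX]]]] Hpo]]].
exact/HnX/(X_above_canonical HXs HXsub Hpo).
Qed.

(* Minimality of the canonical interpretation of Pi^Q.  A derived tuple
   missing from X comes from a rule whose body fails under ^o, hence from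
   a missing tuple of a predicate it depends on. *)
Lemma missing_step (X : S -> seq Const -> Prop) :
  (forall s, mq s -> forall us, X s us -> canonical s us) ->
  psi_o id (bintP bint) canonical mq X PiQ ->
  forall q, (exists t, M q t /\ ~ X (SQ q) t) ->
  exists q', depends PiQ q q' /\ exists t, M q' t /\ ~ X (SQ q') t.
Proof.
move=> HXsub Hpo q [t [HMt HnXt]]; apply: NNPP => Hno.
case/ExP_In: (proj1 (HM.2 q t) HMt) => r [Hr [rho [Hh Hb]]].
have [q'' [ts E]] := query_rule_head HQ Hr.
have Eq : q'' = q by move: Hh; rewrite E /= => -[[[->]] _|[]].
have Hbo : AllP (sat_lit_o id (bintP bint) canonical mq X rho) (rbody r).
  apply/AllP_In => l Hl; have Hls := AllP_el (AllP_el (proj1 (proj2 HQ)) Hr) Hl.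
  have Hbl := AllP_el Hb Hl.
  case: l Hl Hls Hbl => [s ts'|s ts'|[] b] Hl //=; case: s Hl => // q' Hl _ /= H.
  + rewrite /relo /=; apply: NNPP => HnX'; apply: Hno; exists q'.
    split; last by exists (map (ev rho) ts').
    by apply: (ExP_intro Hr); split; [exists ts; rewrite E Eq|exact: (ExP_intro Hl)].
  + by rewrite /relo /=; split=> // /(HXsub (SQ q') erefl).
have := proj1 (AllP_el Hpo Hr rho) Hbo; rewrite E /= /sat_atom_o /relo /= => -[HX|[]].
by apply: HnXt; move: Hh; rewrite E /= => -[[_ <-]|[]]; rewrite -Eq.
Qed.

(* Each query predicate is the head of some rule of Pi^Q, so the index of
   its first defining rule injects QPred into 'I_(size PiQ). *)
Lemma defining_rule_index :
  exists h : QPred -> nat,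
    (forall q, h q < size PiQ) /\ (forall q q', h q = h q' -> q = q').
Proof.
pose r0 : rule S Const Bi := {| rhead := [::]; rbody := [::] |}.
have Hex q : exists i, i < size PiQ /\ head_is (nth r0 PiQ i) q.
  case/ExP_In: (HQ.2.2.2.1 q) => r [Hr Hh].
  by have [i [Hi Hn]] := In_nth_ex r0 Hr; exists i; rewrite Hn.
pose h q := sval (constructive_indefinite_description _ (Hex q)).
have Hh q : h q < size PiQ /\ head_is (nth r0 PiQ (h q)) q.
  by rewrite /h; case: constructive_indefinite_description.
exists h; split=> [q|q q' E]; first exact: (Hh q).1.
have [_ [ts Eq]] := Hh q; have [_ [ts' Eq']] := Hh q'.
by move: Eq'; rewrite -E Eq => -[->].
Qed.

Lemma canonical_Phi_Q : Phi id (bintP bint) (sym_ar ar qar) mq PiQ canonical.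
Proof.
split.
  apply/AllP_In => r Hr rho Hb; have [q [ts E]] := query_rule_head HQ Hr.
  rewrite E /=; left; apply/(HM.2 q); apply: (ExP_intro Hr); exists rho.
  split; first by rewrite E; left.
  by apply/(query_body_equiv (rel := canonical) bint HQ rho (fun _ _ => iff_refl _) (fun _ _ => iff_refl _) Hr).
case=> X [_ [HXsub [[s [t [Hs [Ht HnX]]]] Hpo]]].
case: s Hs Ht HnX => // q _ Ht HnX.
have [h [Hh Hinj]] := defining_rule_index.
have [x /(HQ.2.2.2.2.2 x) //] := descent_cycle Hh Hinj (missing_step HXsub Hpo)
  (ex_intro _ t (conj Ht HnX)).
Qed.

End RepairToModel.

Section Directions.
Variables (Const Pred : finType) (QPred Bi : Type) (ar : Pred -> nat) (qar : QPred -> nat)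
  (bint : Bi -> seq Const -> bool) (IC : seq (constr Pred Const Bi))
  (D : seq (Pred * seq Const)) (PiQ : seq (rule (sym Pred QPred) Const Bi)) (Ans : QPred)
  (c0 : Const).
Hypothesis HD : wf_db ar D.
Hypothesis HQ : query_program ar qar PiQ Ans.
Local Notation S := (sym Pred QPred).

Lemma completion_base (U : Type) (ic : Const -> U) (rel : S -> seq U -> Prop) :
  injective ic -> (forall s us, rel s us -> size us = sym_ar ar qar s) -> RD ar ic rel D ->
  forall P t, rel (SBase P) (map ic t) <-> inD D P t.
Proof.
move=> Hinj Hsz [_ [_ Hcomp]] P t.
have Hfact (f : Pred * seq Const) : (f.1 = P /\ map ic t = map ic f.2) <-> (f.1 = P /\ f.2 = t).
  by split; case=> -> E; split=> //; [exact: (inj_map Hinj (esym E))|rewrite E].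
split=> [H|H].
- have Hs : size (map ic t) = ar P by exact: Hsz H.
  by move: H; rewrite (Hcomp P _ Hs); move/(ExP_iff D Hfact).
- have Hs : size (map ic t) = ar P.
    by rewrite size_map; case/ExP_In: H => f [Hf [<- <-]]; exact: (AllP_el HD Hf).
  by rewrite (Hcomp P _ Hs); apply/(ExP_iff D Hfact).
Qed.

Lemma consistent_answer_entails a :
  consistent_answer ar qar bint IC D PiQ Ans a ->
  entails_Ans ar qar bint D (repair_program QPred ar IC) PiQ Ans a.
Proof.
move=> Hca U ic bU rel _ Hsz HbU HRD HPr HPq.
have Hinj : injective ic.
  by move=> c c' E; apply: NNPP => Hne; exact: (HRD.2.1 c c' Hne E).
have Hsz' s t : rel s (map ic t) -> size t = sym_ar ar qar s.
  by move/Hsz; rewrite size_map.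
have HPr' := Phi_transfer Hinj HRD.1 HbU HPr.
have HPq' := Phi_transfer Hinj HRD.1 HbU HPq.
have HR := repair_of_model c0 Hsz' (completion_base Hinj Hsz HRD) HPr'.
exact: Hca _ HR _ (std_model_of_model HQ Hsz' HPq').
Qed.

Lemma RD_canonical (I : instance Const Pred) (M : QPred -> seq Const -> Prop) :
  RD ar id (canonical D I M) D.
Proof.
split; first by move=> u; exists u.
split=> // P us _; apply: ExP_iff => f; rewrite map_id.
by split; case=> -> ->.
Qed.

Lemma entails_consistent_answer a :
  entails_Ans ar qar bint D (repair_program QPred ar IC) PiQ Ans a ->
  consistent_answer ar qar bint IC D PiQ Ans a.
Proof.
move=> Hent I HI M HM.
have := Hent Const id (bintP bint) (canonical D I M) (inhabits c0)
  (fun s us => canonical_size HD HI HM (s := s) (us := us)).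
rewrite map_id; apply.
- by move=> b cs; rewrite map_id.
- exact: RD_canonical.
- exact (canonical_Phi_r qar c0 HD M HI).
- exact (canonical_Phi_Q D HQ HM).
Qed.

End Directions.

Theorem proposition3 (Const Pred : finType) (QPred Bi : Type)
  (ar : Pred -> nat) (qar : QPred -> nat) (bint : Bi -> seq Const -> bool)
  (IC : seq (constr Pred Const Bi)) (D : seq (Pred * seq Const))
  (PiQ : seq (rule (sym Pred QPred) Const Bi)) (Ans : QPred)
  (HConst : inhabited Const)
  (HD : wf_db ar D)
  (HIC : AllP (wf_constr ar) IC)
  (HQ : query_program ar qar PiQ Ans)
  (a : seq Const) (Ha : size a = qar Ans) :
  consistent_answer ar qar bint IC D PiQ Ans a <->
  entails_Ans ar qar bint D (repair_program QPred ar IC) PiQ Ans a.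
Proof.
case: HConst => c0; split.
- exact (consistent_answer_entails c0 HD HQ (a := a)).
- exact (entails_consistent_answer c0 HD HQ (a := a)).
Qed.
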